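(* Let $L\ge1$ and $a_1,\dots,a_{2L}\ge0$ be integers, and let $\beta=x_1^{a_1}x_2^{a_2}\cdots x_1^{a_{2L-1}}x_2^{a_{2L}}\in\mathcal{B}_3$, with $D=\sum_{i=1}^{2L}a_i$ and $Z=\#\{i:1\le i\le 2L,\ a_i=0\}$. Then $\deg V_3(\beta)\le 3D-2L+2Z$.
   Context: $\mathcal{B}_3$ is the 3-strand braid group with Artin generators $x_1,x_2$; $V_3(\beta)$ is the Jones polynomial of the closure of $\beta$, normalized by $V(\text{unknot})=1$ and $q^{-1}V_{L_+}-qV_{L_-}=(q^{1/2}-q^{-1/2})V_{L_0}$, written as a Laurent polynomial in $s=q^{-1/2}$; $\deg$ is the highest exponent of $s$. Conventions: closures of $\alpha x_i^{e+2}\gamma$, $\alpha x_i^{e+1}\gamma$, $\alpha x_i^{e}\gamma$ play the roles of $L_-,L_0,L_+$ (e.g. the closure of $x_1^2\in\mathcal B_2$ has Jones polynomial $-s-s^5$). *)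

(* Jones polynomial of closures of 3-braids via the
   Kauffman bracket state sum, computed in the Temperley-Lieb algebra TL_3. *)
From mathcomp Require Import all_boot all_algebra.
Set Implicit Arguments. Unset Strict Implicit. Unset Printing Implicit Defensive.
Import GRing.Theory Num.Theory.
Local Open Scope ring_scope.

(* A braid generator: [false] = x_1, [true] = x_2 (positive Artin generators).
   A braid word is a [seq bool], read left to right. *)

Inductive tl3 := TI | TE1 | TE2 | TE12 | TE21.

(* Right multiplication of a basis diagram by e_g: returns the resulting
   basis diagram and the number of closed loops created (each loop = delta). *)
Definition tl3_mul_e (d : tl3) (g : bool) : tl3 * nat :=
  match g, d with
  | false, TI => (TE1, 0%N)   | false, TE1 => (TE1, 1%N)
  | false, TE2 => (TE21, 0%N) | false, TE12 => (TE1, 0%N)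
  | false, TE21 => (TE21, 1%N)
  | true, TI => (TE2, 0%N)    | true, TE1 => (TE12, 0%N)
  | true, TE2 => (TE2, 1%N)   | true, TE12 => (TE12, 1%N)
  | true, TE21 => (TE2, 0%N)
  end.

Definition closure_loops (d : tl3) : nat :=
  match d with TI => 3 | TE1 | TE2 => 2 | TE12 | TE21 => 1 end.

(* Kauffman states: each crossing x_i = A * 1 + A^-1 * e_i.  For every state,
   record (b, k) = (number of e-smoothings, total number of loops of the
   smoothed closed diagram). *)
Fixpoint state_data (w : seq bool) (d : tl3) (b l : nat) : seq (nat * nat) :=
  match w with
  | [::] => [:: (b, l + closure_loops d)%N]
  | g :: w' =>
      state_data w' d b l ++
      (let: (d', c) := tl3_mul_e d g in state_data w' d' b.+1 (l + c)%N)
  end.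

(* With A = s^(-1/2) (s = q^(-1/2)), delta = -A^2 - A^-2 = -(s + s^-1), writhe
   = size w, and V = (-A^3)^(-w) <D>, a state (b,k) contributes
     (-1)^D s^(D+b) (-(s + s^-1))^(k-1),   D = size w.
   We store V(s) as s^(-jones_shift w) * jones_poly w, jones_poly w : {poly int}. *)
Definition jones_shift (w : seq bool) : nat := (size w + 2)%N.

Definition state_term (w : seq bool) (bk : nat * nat) : {poly int} :=
  let D := size w in
  (-1) ^+ (D + bk.2.-1) * 'X^(D + bk.1 + (jones_shift w - bk.2.-1))
    * (1 + 'X^2) ^+ (bk.2.-1).

Definition jones_poly (w : seq bool) : {poly int} :=
  \sum_(bk <- state_data w TI 0 0) state_term w bk.

Definition jones_coef (w : seq bool) (n : int) : int :=
  match (n + (jones_shift w)%:Z)%R with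
  | Posz m => (jones_poly w)`_m
  | Negz _ => 0
  end.

Definition jones_deg_le (w : seq bool) (N : int) : Prop :=
  forall n : int, jones_coef w n != 0 -> n <= N.

(* The braid x_1^(a_1) x_2^(a_2) x_1^(a_3) ... (0-based index i: even -> x_1). *)
Definition braid_word (a : seq nat) : seq bool :=
  flatten [seq nseq (nth 0%N a i) (odd i) | i <- iota 0 (size a)].

From mathcomp Require Import all_boot all_order all_algebra zify.
Set Implicit Arguments. Unset Strict Implicit. Unset Printing Implicit Defensive.
Import Order.TTheory GRing.Theory.

(* A Kauffman state with b e-smoothings and k loops contributes a monomial of
   degree at most D + b + k - 1, so it suffices to bound b + k.  Track, along
   the word, the current Temperley-Lieb diagram d and b + l, l the loops
   closed so far.  In a block x_i^n the first e-smoothing moves d to a diagram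
   absorbing e_i and earns 1; every later one earns 2 (a smoothing and a
   loop).  So a block earns at most 2n - 1, and nothing if it has no
   e-smoothing.  A weight on the five diagrams absorbs the case analysis over
   a pair of blocks x_1^a x_2^c: b + l + weight d grows by at most
   budget a + budget c, where budget 0 = 1 and budget n = 2n - 1.  The
   identity diagram is overweighted for the final closure, which the first
   pair pays for (hence L >= 1); summing gives b + k <= 2D - 2L + 2Z + 1. *)

Fixpoint smooths_to (x : seq bool) (d : tl3) (b l : nat)
    (d' : tl3) (b' l' : nat) : Prop :=
  match x with
  | [::] => [/\ d = d', b = b' & l = l']
  | g :: x' => smooths_to x' d b l d' b' l' \/
      smooths_to x' (tl3_mul_e d g).1 b.+1 (l + (tl3_mul_e d g).2) d' b' l'
  end.

Lemma state_data_cat x w d b l p :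
  p \in state_data (x ++ w) d b l ->
  exists d' b' l', smooths_to x d b l d' b' l' /\ p \in state_data w d' b' l'.
Proof.
elim: x d b l => [|g x IHx] d b l /=; first by move=> p_w; exists d, b, l.
case: (tl3_mul_e d g) => d1 c.
rewrite mem_cat => /orP[] /IHx[d' [b' [l' [x_d' p_w]]]].
  by exists d', b', l'; split=> //; left.
by exists d', b', l'; split=> //; right.
Qed.

Lemma state_data_bounds w d b l (x y : nat) :
  (x, y) \in state_data w d b l ->
  [/\ (y + b <= x + l + 3)%N, (x <= b + size w)%N & (1 <= y)%N].
Proof.
elim: w d b l => [|g w IHw] d b l /=.
  by rewrite inE => /eqP[-> ->]; case: d; split=> /=; lia.
have : ((tl3_mul_e d g).2 <= 1)%N by case: g; case: d.
case: (tl3_mul_e d g) => d1 c /= le_c1.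
by rewrite mem_cat => /orP[] /IHw[]; split; lia.
Qed.

Definition absorbs (g : bool) (d : tl3) : bool :=
  match g, d with
  | false, TE1 | false, TE21 | true, TE2 | true, TE12 => true
  | _, _ => false
  end.

Lemma tl3_mul_e_absorbs g d : absorbs g d -> tl3_mul_e d g = (d, 1%N).
Proof. by case: g; case: d. Qed.

Lemma tl3_mul_e_nonabsorbs g d : ~~ absorbs g d ->
  (tl3_mul_e d g).2 = 0%N /\ absorbs g (tl3_mul_e d g).1.
Proof. by case: g; case: d. Qed.

Lemma smooths_nseq_absorbs g n d b l d' b' l' : absorbs g d ->
  smooths_to (nseq n g) d b l d' b' l' -> d' = d /\ (b' + l' <= b + l + 2 * n)%N.
Proof.
move=> /tl3_mul_e_absorbs e_d; elim: n b l => [|n IHn] b l /=.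
  by case=> -> -> ->; split=> //; lia.
by rewrite e_d /= => -[] /IHn[-> le_bl]; split=> //; lia.
Qed.

Lemma smooths_nseq g n d b l d' b' l' :
  smooths_to (nseq n g) d b l d' b' l' ->
  (d' = d /\ (b' + l' <= b + l + (if absorbs g d then 2 * n else 0))%N) \/
  [/\ 0 < n, d' = (tl3_mul_e d g).1 & b' + l' <= b + l + 2 * n - 1]%N.
Proof.
have [abs_d|nabs_d] := boolP (absorbs g d).
  by move/(smooths_nseq_absorbs abs_d)=> [-> le_bl]; left.
have [no_loop abs_ed] := tl3_mul_e_nonabsorbs nabs_d.
elim: n b l => [|n IHn] b l /=; first by case=> -> -> ->; left; split=> //; lia.
case=> [/IHn[[-> le_bl]|[_ -> le_bl]]|/(smooths_nseq_absorbs abs_ed)[-> le_bl]].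
- by left; split=> //; lia.
- by right; split=> //; lia.
- by right; rewrite no_loop in le_bl; split=> //; lia.
Qed.

Definition block_budget (n : nat) : nat := if n is m.+1 then (2 * m + 1)%N else 1%N.

(* Found by checking the finitely many transitions through a pair of blocks;
   also closure_loops d <= tl3_weight d + 1. *)
Definition tl3_weight (d : tl3) : nat :=
  match d with TI => 2 | TE1 => 1 | TE2 => 1 | TE12 => 0 | TE21 => 2 end.

Lemma block_budget_cases n :
  (block_budget n = 2 * n - 1 /\ 0 < n)%N \/ (block_budget n = 1 /\ n = 0)%N.
Proof. by case: n => [|n] /=; [right | left]; lia. Qed.

Lemma state_data_pair a c w d b l p :
  p \in state_data (nseq a false ++ nseq c true ++ w) d b l ->
  exists d' b' l', p \in state_data w d' b' l' /\
    let bound := (b + l + block_budget a + block_budget c)%N in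
    (b' + l' + tl3_weight d' <= tl3_weight d + bound)%N /\
    (d = TI -> b' + l' + tl3_weight d' <= bound)%N.
Proof.
case/state_data_cat=> d1 [b1 [l1 [x1_d1 /state_data_cat[d' [b' [l' [x2_d' p_w]]]]]]].
exists d', b', l'; split=> //; move: x1_d1 x2_d'.
have [[-> a_gt0]|[-> ->]] := block_budget_cases a;
have [[-> c_gt0]|[-> ->]] := block_budget_cases c;
move=> /smooths_nseq[[-> le1]|[_ -> le1]] /smooths_nseq[[-> le2]|[_ -> le2]];
by case: d le1 le2 => /= le1 le2; split=> [|d_TI]; try discriminate; lia.
Qed.

Lemma braid_word_cons2 a c r :
  braid_word [:: a, c & r] = nseq a false ++ nseq c true ++ braid_word r.
Proof.
rewrite /braid_word /= -(addn0 2) iotaDl -map_comp.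
by congr (_ ++ (_ ++ flatten _)); apply: eq_map => i /=; rewrite negbK.
Qed.

Lemma state_data_braid_word_weight n r d b l x y :
  size r = (2 * n)%N -> (x, y) \in state_data (braid_word r) d b l ->
  (x + y <= b + l + tl3_weight d + \sum_(z <- r) block_budget z + 1)%N.
Proof.
elim: n r d b l => [|n IHn] [|a [|c r]] d b l size_r;
  try by move: size_r => /=; lia.
  by rewrite big_nil inE => /eqP[-> ->]; case: d => /=; lia.
have {}size_r : size r = (2 * n)%N by move: size_r => /=; lia.
rewrite braid_word_cons2 => /state_data_pair[d' [b' [l' [p_w [step _]]]]].
by have := IHn _ _ _ _ size_r p_w; rewrite !big_cons; lia.
Qed.

Lemma state_data_braid_word_bound L a :
  (1 <= L)%N -> size a = (2 * L)%N -> forall x y,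
  (x, y) \in state_data (braid_word a) TI 0 0 ->
  (x + y <= \sum_(z <- a) block_budget z + 1)%N.
Proof.
case: a => [|a [|c r]] L_gt0 size_a x y; try by move: size_a => /=; lia.
have size_r : size r = (2 * L.-1)%N by move: size_a => /=; lia.
rewrite braid_word_cons2 => /state_data_pair[d' [b' [l' [p_w [_ /(_ erefl) first_pair]]]]].
by have := state_data_braid_word_weight size_r p_w; rewrite !big_cons; lia.
Qed.

Lemma sum_block_budget a :
  (\sum_(z <- a) block_budget z + size a =
   2 * \sum_(z <- a) z + 2 * count (fun z => z == 0%N) a)%N.
Proof.
elim: a => [|z a IHa]; first by rewrite !big_nil.
rewrite !big_cons /=; move: IHa.
by case: z => [|z] /=; lia.
Qed.

Lemma size_braid_word r : size (braid_word r) = (\sum_(z <- r) z)%N.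
Proof.
rewrite /braid_word size_flatten /shape -map_comp.
rewrite (eq_map (g := nth 0%N r)) => [|i]; last by rewrite /= size_nseq.
by rewrite -/(mkseq _ _) mkseq_nth sumnE.
Qed.

Local Open Scope ring_scope.

(* The hypothesis makes the truncated subtraction in the exponent exact. *)
Lemma size_state_term w (x y : nat) : (y.-1 <= size w + 2)%N ->
  (size (state_term w (x, y)) <= 2 * size w + 3 + x + y.-1)%N.
Proof.
move=> le_y; rewrite /state_term /jones_shift /=.
set k := y.-1; set e := (size w + x + _)%N.
have size_mon : size ((-1 : {poly int}) ^+ (size w + k) * 'X^e) = e.+1.
  by rewrite -signr_odd mulr_sign; case: ifP; rewrite ?size_polyN size_polyXn.
have size_1X2 : (size (1 + 'X^2 : {poly int})%R <= 3)%N.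
  by apply: leq_trans (size_polyD _ _) _; rewrite size_poly1 size_polyXn.
have size_pow : (size ((1 + 'X^2 : {poly int}) ^+ k)%R <= 2 * k + 1)%N.
  by apply: leq_trans (size_poly_exp_leq _ _) _; nia.
apply: leq_trans (size_polyMleq _ _) _; rewrite size_mon.
by move: size_pow le_y; rewrite /e /k; move: (size _) => s; lia.
Qed.

Lemma size_jones_poly w N :
  (forall x y, (x, y) \in state_data w TI 0 0 -> x + y <= N + 1)%N ->
  (size (jones_poly w) <= 2 * size w + 3 + N)%N.
Proof.
move=> le_xy; apply: leq_trans (size_sum _ _ _) _.
apply/bigmax_leqP_seq => -[x y] xy_w _.
have [le_yx le_x y_gt0] := state_data_bounds xy_w.
have le_y : (y.-1 <= size w + 2)%N by lia.
apply: leq_trans (size_state_term x le_y) _.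
by have := le_xy _ _ xy_w; lia.
Qed.

Lemma jones_deg_le_size w (N : int) :
  (size (jones_poly w))%:Z <= N + (size w)%:Z + 3 -> jones_deg_le w N.
Proof.
move=> le_size n; rewrite /jones_coef /jones_shift.
case def_m: (n + _) => [m|]; last by rewrite eqxx.
apply: contraR; rewrite -ltNge => lt_Nn; rewrite nth_default // -lez_nat.
by set s := size (jones_poly w); lia.
Qed.

Theorem theorem4p11 (L : nat) (a : seq nat) :
  (1 <= L)%N -> size a = (2 * L)%N ->
  jones_deg_le (braid_word a)
    (3 * (\sum_(x <- a) x)%N%:Z - 2 * L%:Z + 2 * (count (fun x => x == 0%N) a)%:Z).
Proof.
move=> L_gt0 size_a; apply: jones_deg_le_size.
have := size_jones_poly (state_data_braid_word_bound L_gt0 size_a).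
have := sum_block_budget a; rewrite size_braid_word size_a.
by lia.
Qed.
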